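(* Consider the genetic algorithm with adaptive population size (APGA) described in the context, with maximum lifetime parameter $MaxLT$ and an arbitrary initial population size $P(0)\ge 1$. Then for every generation $t \ge MaxLT$, $$P(t) \le 2\,MaxLT + 1.$$
   Context: APGA is a steady-state genetic algorithm in which every individual carries a remaining lifetime (RLT). Parameters: an initial population size $P(0)$ and lifetime bounds $1\le MinLT\le MaxLT$; every individual, whether in the initial population or newly created, is assigned at creation a lifetime (its initial RLT) which is a positive integer between $MinLT$ and $MaxLT$ (the assignment may depend on fitness, e.g. via a bi-linear rule, but never exceeds $MaxLT$). Generation $t\ge 1$ proceeds as follows, starting from the population at the end of generation $t-1$: (1) decrement by 1 the RLT of every member except the best (highest-fitness) member of the population; (2) select 2 individuals, apply crossover and mutation to obtain 2 offspring, evaluate them and insert them into the population; (3) remove from the population all members whose RLT equals 0; (4) assign lifetimes (RLT values) to the 2 new members. $P(t)$ denotes the population size at the end of generation $t$, and $P(0)$ the size of the initial population. *)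

From mathcomp Require Import all_boot all_order.
Set Implicit Arguments. Unset Strict Implicit. Unset Printing Implicit Defensive.
Import Order.TTheory.
Local Open Scope order_scope.

(* An individual is a pair (fitness, remaining lifetime RLT).
   A population is a sequence of individuals, kept in order of creation
   (new offspring are appended at the end, removal preserves order). *)
Section APGA.
Context {d : Order.disp_t} {T : orderType d}.

Definition indiv := (T * nat)%type.

(* Index of the best (highest-fitness) member; ties are broken in favour of
   the earliest member in the population (the oldest one). *)
Definition best_index (p : seq indiv) : nat :=
  find (fun x : indiv => all (fun y : indiv => y.1 <= x.1) p) p.

Definition decr_rlt (p : seq indiv) : seq indiv :=
  [seq (if ix.1 == best_index p then ix.2 else (ix.2.1, ix.2.2.-1))
  | ix <- zip (iota 0 (size p)) p].

(* The two offspring have arbitrary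
   fitness (selection/crossover/mutation are unconstrained) and receive
   lifetimes in [MinLT, MaxLT] (possibly depending on fitness). The
   offspring are not subject to the removal of step (3), since their RLT is
   only assigned in step (4). *)
Definition apga_step (MinLT MaxLT : nat) (p p' : seq indiv) : Prop :=
  exists (f1 f2 : T) (l1 l2 : nat),
    [/\ (MinLT <= l1 <= MaxLT)%N, (MinLT <= l2 <= MaxLT)%N &
        p' = [seq x <- decr_rlt p | x.2 != 0%N] ++ [:: (f1, l1); (f2, l2)]].

End APGA.

From mathcomp Require Import all_boot all_order zify.
Import Order.TTheory.

(* Give every member an age.  If y precedes z in the population and
   fit z <= fit y, then z is never the best member while y is alive (fitness
   never changes and ties go to the earlier member), so z lost one unit of
   RLT in each of the generations they shared: RLT z + shared <= MaxLT, where
   shared is the age of the younger of the two; symmetrically for y when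
   fit y < fit z.  Hence two members of age >= MaxLT cannot coexist, and all
   other members were born during the last MaxLT generations, at most two per
   generation. *)

Section Decrement.
Context {d : Order.disp_t} {T : orderType d}.
Implicit Types (p : seq (T * nat)).

Lemma size_decr_rlt p : size (decr_rlt p) = size p.
Proof. by rewrite size_map size_zip size_iota minnn. Qed.

Lemma nth_decr_rlt (x0 : T * nat) p i : i < size p ->
  nth x0 (decr_rlt p) i =
  if i == best_index p then nth x0 p i else ((nth x0 p i).1, (nth x0 p i).2.-1).
Proof.
move=> ip; rewrite (nth_map (0, x0)) ?size_zip ?size_iota ?minnn //.
by rewrite nth_zip ?size_iota // nth_iota.
Qed.

Lemma best_index_maximal (x0 : T * nat) p : best_index p < size p ->
  {in p, forall y, y.1 <= (nth x0 p (best_index p)).1}%O.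
Proof.
move=> bp; apply/allP.
have := @nth_find _ x0 (fun x => all (fun y => y.1 <= x.1)%O p) p.
by apply; rewrite has_find.
Qed.

Lemma best_index_dominated (x0 : T * nat) p i j : i < j < size p ->
  ((nth x0 p j).1 <= (nth x0 p i).1)%O -> j != best_index p.
Proof.
move=> /andP[ij jp] ji; apply/eqP=> jb.
have ib : i < best_index p by rewrite -jb.
have /negP[] := before_find x0 ib.
apply/allP=> y /(best_index_maximal x0); rewrite -jb => /(_ jp) /le_trans; apply.
exact: ji.
Qed.

Lemma best_index_dominating (x0 : T * nat) p i j : i < size p -> j < size p ->
  ~~ ((nth x0 p j).1 <= (nth x0 p i).1)%O -> i != best_index p.
Proof.
move=> ip jp /negP ji; apply/eqP=> ib; apply: ji.
by rewrite ib; apply: (best_index_maximal x0); rewrite ?mem_nth -?ib.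
Qed.

Lemma decr_rlt_bounded n p :
  all (fun x => x.2 <= n) p -> all (fun x => x.2 <= n) (decr_rlt p).
Proof.
move=> p_le; rewrite all_map.
have : all (preim snd (fun x => x.2 <= n)) (zip (iota 0 (size p)) p).
  by rewrite -(all_map snd) -/(unzip2 _) unzip2_zip // size_iota.
by apply: sub_all => -[i x] /=; case: ifP => _ /=; lia.
Qed.

End Decrement.

Lemma count_ltn_le_mul (s : seq nat) n m : (forall k, k < m -> count_mem k s <= n) ->
  count (fun a => a < m) s <= n * m.
Proof.
elim: m => [_|m IH bounded]; first by rewrite (@eq_count _ _ pred0) ?count_pred0.
rewrite (@eq_count _ _ (predU (pred1 m) (fun a => a < m))); last first.
  by move=> a; rewrite /= ltnS leq_eqVlt.
apply: leq_trans (leq_addr (count (predI (pred1 m) (fun a => a < m)) s) _) _.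
rewrite count_predUI mulnS leq_add ?bounded ?IH // => k k_lt.
exact/bounded/leqW.
Qed.

Section AgedPopulation.
Context {d : Order.disp_t} {T : orderType d} (MaxLT : nat).
Notation member := ((T * nat) * nat)%type.
(* A member is (individual, age): fitness z.1.1, RLT z.1.2, and the number
   z.2 of generations it has survived. *)
Implicit Types (y z : member) (zs : seq member).

Definition alive z : bool := z.1.2 != 0.
Definition grow_older z : member := (z.1, z.2.+1).
Definition decr_member z : member := ((z.1.1, z.1.2.-1), z.2).

(* For y preceding z; minn y.2 z.2 generations have passed since both exist. *)
Definition coexist_bound y z : bool :=
  if (z.1.1 <= y.1.1)%O then z.1.2 + minn y.2 z.2 <= MaxLT
  else y.1.2 + minn y.2 z.2 <= MaxLT.

Definition decr_rlt_aged zs : seq member := zip (decr_rlt (unzip1 zs)) (unzip2 zs).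

Definition aged_step zs (offspring : seq (T * nat)) : seq member :=
  [seq grow_older z | z <- decr_rlt_aged zs & alive z] ++ [seq (x, 0) | x <- offspring].

Lemma size_decr_rlt_aged zs : size (decr_rlt_aged zs) = size zs.
Proof. by rewrite size_zip size_decr_rlt !size_map minnn. Qed.

Lemma unzip2_decr_rlt_aged zs : unzip2 (decr_rlt_aged zs) = unzip2 zs.
Proof. by rewrite unzip2_zip // size_decr_rlt !size_map. Qed.

Lemma unzip1_aged_step zs offspring :
  unzip1 (aged_step zs offspring) =
  [seq x <- decr_rlt (unzip1 zs) | x.2 != 0] ++ offspring.
Proof.
rewrite /unzip1 map_cat -!map_comp /= map_id; congr (_ ++ _).
rewrite -[decr_rlt _](@unzip1_zip _ _ _ (unzip2 zs)) ?size_decr_rlt ?size_map //.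
by rewrite filter_map.
Qed.

Lemma nth_decr_rlt_aged z0 zs i : i < size zs ->
  nth z0 (decr_rlt_aged zs) i =
  if i == best_index (unzip1 zs) then nth z0 zs i else decr_member (nth z0 zs i).
Proof.
move=> izs; case: z0 => x0 a0.
rewrite nth_zip ?size_decr_rlt ?size_map // nth_decr_rlt ?size_map //.
by rewrite !(nth_map (x0, a0)) //; case: ifP => _; case: (nth _ zs i) => [[]].
Qed.

Lemma coexist_bound_decr y z (spare_y spare_z : bool) :
  ~~ (if (z.1.1 <= y.1.1)%O then spare_z else spare_y) ->
  coexist_bound y z ->
  let y' := if spare_y then y else decr_member y in
  let z' := if spare_z then z else decr_member z in
  alive y' ==> alive z' ==> coexist_bound (grow_older y') (grow_older z').
Proof.
rewrite /coexist_bound /alive.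
by case: ifP => zy; case: spare_y; case: spare_z => //= _; rewrite zy; lia.
Qed.

Lemma pairwise_decr_rlt_aged zs : pairwise coexist_bound zs ->
  pairwise (fun y z => alive y ==> alive z ==> coexist_bound (grow_older y) (grow_older z))
    (decr_rlt_aged zs).
Proof.
case: zs => [//|z0 zs'] /(pairwiseP z0) zs_ok; set zs := z0 :: zs' in zs_ok *.
apply/(pairwiseP z0) => i j; rewrite !inE size_decr_rlt_aged => izs jzs ij.
rewrite !nth_decr_rlt_aged //; apply: coexist_bound_decr (zs_ok i j izs jzs ij).
have fit k : k < size zs -> (nth z0.1 (unzip1 zs) k).1 = (nth z0 zs k).1.1.
  by move=> kzs; rewrite (nth_map z0).
rewrite -!fit //; case: ifP => ji.
- by apply: (best_index_dominated z0.1 _ _ _ _ ji); rewrite ij size_map.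
- by apply: (best_index_dominating z0.1 _ _ _ _ _ (negbT ji)); rewrite size_map.
Qed.

Lemma pairwise_survivors zs : pairwise coexist_bound zs ->
  pairwise coexist_bound [seq grow_older z | z <- decr_rlt_aged zs & alive z].
Proof.
move=> /pairwise_decr_rlt_aged /(pairwise_filter alive); rewrite pairwise_map.
apply: sub_in_pairwise (filter_all alive _) => y z.
by rewrite !unfold_in /alive => -> ->.
Qed.

Lemma coexist_bound_newborn y x :
  y.1.2 <= MaxLT -> x.2 <= MaxLT -> coexist_bound y (x, 0).
Proof. by rewrite /coexist_bound minn0 !addn0; case: ifP. Qed.

Lemma pairwise_newborns (xs : seq (T * nat)) : all (fun x => x.2 <= MaxLT) xs ->
  pairwise coexist_bound [seq (x, 0) | x <- xs].
Proof.
elim: xs => //= x xs IH /andP[x_le /allP xs_le]; rewrite IH ?andbT; last exact/allP.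
by rewrite all_map; apply/allP => x' /xs_le; apply: coexist_bound_newborn.
Qed.

Lemma coexist_bound_old y z : alive y -> alive z -> MaxLT <= y.2 -> MaxLT <= z.2 ->
  ~~ coexist_bound y z.
Proof. by rewrite /alive /coexist_bound; case: ifP => _; lia. Qed.

Lemma decr_rlt_aged_bounded zs : all (fun z => z.1.2 <= MaxLT) zs ->
  all (fun z => z.1.2 <= MaxLT) (decr_rlt_aged zs).
Proof.
move=> zs_le.
have /decr_rlt_bounded : all (fun x => x.2 <= MaxLT) (unzip1 zs) by rewrite all_map.
by rewrite -[decr_rlt _](@unzip1_zip _ _ _ (unzip2 zs)) ?size_decr_rlt ?size_map // all_map.
Qed.

Lemma rlt_bounded_aged_step zs offspring :
  all (fun z => 0 < z.1.2 <= MaxLT) zs -> all (fun x => 0 < x.2 <= MaxLT) offspring ->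
  all (fun z => 0 < z.1.2 <= MaxLT) (aged_step zs offspring).
Proof.
move=> zs_ok off_ok; rewrite all_cat !all_map off_ok andbT all_filter.
have /decr_rlt_aged_bounded : all (fun z => z.1.2 <= MaxLT) zs.
  by apply: sub_all zs_ok => z /andP[].
by apply: sub_all => z /=; rewrite /alive; lia.
Qed.

Lemma pairwise_aged_step zs offspring :
  pairwise coexist_bound zs -> all (fun z => z.1.2 <= MaxLT) (aged_step zs offspring) ->
  pairwise coexist_bound (aged_step zs offspring).
Proof.
move=> zs_ok; rewrite all_cat => /andP[/allP surv_le newb_le].
rewrite pairwise_cat pairwise_survivors // pairwise_newborns ?andbT; last first.
  by rewrite all_map in newb_le.
apply/allrelP => y _ /surv_le y_le /mapP[x x_in ->]; apply: coexist_bound_newborn y_le _.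
by move: newb_le; rewrite all_map => /allP/(_ x x_in).
Qed.

Lemma count_age_aged_step zs offspring k :
  count_mem k.+1 (unzip2 (aged_step zs offspring)) <= count_mem k (unzip2 zs).
Proof.
rewrite -(unzip2_decr_rlt_aged zs) /unzip2 map_cat count_cat !count_map.
rewrite [count _ offspring](@eq_count _ _ pred0) // count_pred0 addn0 count_filter.
by apply: sub_count => z /andP[].
Qed.

Lemma count_newborns_aged_step zs offspring :
  count_mem 0 (unzip2 (aged_step zs offspring)) = size offspring.
Proof.
rewrite /unzip2 map_cat count_cat !count_map.
rewrite [count _ (filter _ _)](@eq_count _ _ pred0) // count_pred0.
by rewrite (@eq_count _ _ predT) // count_predT.
Qed.

(* n bounds the offspring per generation; at time t the members of age < t
   are exactly the surviving offspring, the initial members having age t. *)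
Definition apga_invariant n t zs : Prop :=
  [/\ pairwise coexist_bound zs, all (fun z => 0 < z.1.2 <= MaxLT) zs &
      forall k, k < t -> count_mem k (unzip2 zs) <= n].

Lemma apga_invariant_init n (p : seq (T * nat)) : all (fun x => 0 < x.2 <= MaxLT) p ->
  apga_invariant n 0 [seq (x, 0) | x <- p].
Proof.
move=> p_rlt; split=> //; last by rewrite all_map.
by apply: pairwise_newborns; apply: sub_all p_rlt => x /andP[].
Qed.

Lemma apga_invariant_step n t zs offspring :
  apga_invariant n t zs -> size offspring <= n ->
  all (fun x => 0 < x.2 <= MaxLT) offspring ->
  apga_invariant n t.+1 (aged_step zs offspring).
Proof.
move=> [zs_pw zs_rlt zs_ages] off_size off_rlt.
have step_rlt := rlt_bounded_aged_step _ _ zs_rlt off_rlt.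
split=> //.
- by apply: pairwise_aged_step zs_pw _; apply: sub_all step_rlt => z /andP[].
- case=> [_|k k_lt]; first by rewrite count_newborns_aged_step.
  exact: leq_trans (count_age_aged_step _ _ k) (zs_ages k k_lt).
Qed.

Lemma count_old_le1 zs : pairwise coexist_bound zs -> all alive zs ->
  count (fun z => MaxLT <= z.2) zs <= 1.
Proof.
move=> zs_pw zs_alive; rewrite -size_filter.
have : all (fun z => alive z && (MaxLT <= z.2)) [seq z <- zs | MaxLT <= z.2].
  by rewrite all_filter; apply: sub_all zs_alive => z /= ->; apply/implyP.
move: (pairwise_filter (fun z => MaxLT <= z.2) zs_pw).
case: [seq z <- zs | _] => [|y [|z s]] //= /andP[/andP[yz _] _].
case/and3P=> /andP[ya yo] /andP[za zo] _.
by rewrite (negbTE (coexist_bound_old _ _ ya za yo zo)) in yz.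
Qed.

Lemma size_apga_invariant n t zs : apga_invariant n t zs -> MaxLT <= t ->
  size zs <= n * MaxLT + 1.
Proof.
move=> [zs_pw zs_rlt zs_ages] le_t.
rewrite -(count_predC (fun z => MaxLT <= z.2)) addnC leq_add //.
- rewrite (@eq_count _ _ (preim snd (fun a => a < MaxLT))) -?count_map; last first.
    by move=> z /=; rewrite ltnNge.
  by apply: count_ltn_le_mul => k k_lt; apply: zs_ages; apply: leq_trans k_lt le_t.
- by apply: count_old_le1 zs_pw _; apply: sub_all zs_rlt => z /andP[]; rewrite lt0n.
Qed.

End AgedPopulation.

Theorem theorem2 (d : Order.disp_t) (T : orderType d) (MinLT MaxLT : nat)
    (pop : nat -> seq (T * nat)) :
  (1 <= MinLT <= MaxLT)%N ->
  (0 < size (pop 0))%N ->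
  (forall x, x \in pop 0 -> (MinLT <= x.2 <= MaxLT)%N) ->
  (forall t, apga_step MinLT MaxLT (pop t) (pop t.+1)) ->
  forall t, (MaxLT <= t)%N -> (size (pop t) <= 2 * MaxLT + 1)%N.
Proof.
move=> /andP[MinLT_gt0 _] _ pop0_lifetimes step t MaxLT_le_t.
have lifetime_pos l : MinLT <= l <= MaxLT -> 0 < l <= MaxLT.
  by case/andP=> le_l ->; rewrite (leq_trans MinLT_gt0 le_l).
have aged_pop s : exists zs, pop s = unzip1 zs /\ apga_invariant MaxLT 2 s zs.
  elim: s => [|s [zs [pop_s zs_inv]]].
    exists [seq (x, 0) | x <- pop 0]; split.
      by rewrite /unzip1 -map_comp; symmetry; apply: map_id.
    by apply: apga_invariant_init; apply/allP => x /pop0_lifetimes/lifetime_pos.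
  have [f1 [f2 [l1 [l2 [l1_ok l2_ok ->]]]]] := step s.
  exists (aged_step zs [:: (f1, l1); (f2, l2)]).
  rewrite unzip1_aged_step -pop_s; split=> //.
  by apply: apga_invariant_step => //=; rewrite !lifetime_pos.
have [zs [-> zs_inv]] := aged_pop t.
by rewrite size_map; apply: size_apga_invariant zs_inv MaxLT_le_t.
Qed.
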